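(* Let $n\ge 5$ and $k\ge 1$, and let $\mathcal{G}^4_n$ be the graph on $\{1,\dots,n\}$ in which each node $i$ is adjacent to $i\pm1$ and $i\pm 2 \pmod n$. Then $$M^{\mathcal{G}^4_n}_{k,n}\le M^C_{k,\lfloor n/2\rfloor}+M^C_{k,\lceil n/2\rceil}+2 .$$ In particular, $M^{\mathcal{G}^4_n}_{k,n}=O(2k\log(n/(2k)))+2$.
   Context: Let $G=(V,E)$ be a simple undirected graph with $V=\{1,\dots,n\}$. A measurement matrix for $G$ is a matrix $A\in\{0,1\}^{m\times n}$ in which every nonzero row has a support that induces a connected subgraph of $G$. A vector $x\in\mathbb{R}^n$ is $k$-sparse if it has at most $k$ nonzero entries. $A$ identifies all $k$-sparse vectors if $Ax_1\ne Ax_2$ for every two distinct $k$-sparse vectors $x_1,x_2$. $M^G_{k,n}$ is the minimum number of rows of a measurement matrix for $G$ that identifies all $k$-sparse vectors. $M^C_{k,N}$ is the minimum number of rows of an arbitrary matrix in $\{0,1\}^{m\times N}$ that identifies all $k$-sparse vectors in $\mathbb{R}^N$; equivalently, it is $M^{K_N}_{k,N}$ for the complete graph $K_N$. It is known that $M^C_{k,N}=O(k\log(N/k))$. *)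

From Stdlib Require Import Reals ClassicalEpsilon.
From mathcomp Require Import all_boot all_algebra.
Set Implicit Arguments. Unset Strict Implicit. Unset Printing Implicit Defensive.

(* The subgraph induced by S is connected (empty / singleton sets count as connected). *)
Definition induced_connected (n : nat) (adj : rel 'I_n) (S : {set 'I_n}) : bool :=
  [forall u in S, forall v in S,
     connect [rel a b | [&& a \in S, b \in S & adj a b]] u v].

Definition row_support (m n : nat) (A : 'M[bool]_(m, n)) (i : 'I_m) : {set 'I_n} :=
  [set j | A i j].

Definition measurement_matrix (m n : nat) (adj : rel 'I_n) (A : 'M[bool]_(m, n)) : Prop :=
  forall i : 'I_m, row_support A i != set0 -> induced_connected adj (row_support A i).

Definition mulv (m n : nat) (A : 'M[bool]_(m, n)) (x : 'I_n -> R) (i : 'I_m) : R :=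
  \big[Rplus/R0]_(j : 'I_n | A i j) x j.

Definition ksparse (n k : nat) (x : 'I_n -> R) : Prop :=
  exists S : {set 'I_n}, #|S| <= k /\ forall j, j \notin S -> x j = R0.

Definition identifies (m n k : nat) (A : 'M[bool]_(m, n)) : Prop :=
  forall x1 x2 : 'I_n -> R, ksparse k x1 -> ksparse k x2 ->
    x1 <> x2 -> mulv A x1 <> mulv A x2.

(* The least natural number satisfying P (chosen by Hilbert's epsilon;
   P always has a least element in our uses). *)
Definition min_nat (P : nat -> Prop) : nat :=
  epsilon (inhabits 0) (fun m => P m /\ forall m', P m' -> m <= m').

Definition MG (n k : nat) (adj : rel 'I_n) : nat :=
  min_nat (fun m => exists A : 'M[bool]_(m, n),
                      measurement_matrix adj A /\ identifies k A).

Definition MC (k N : nat) : nat :=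
  min_nat (fun m => exists A : 'M[bool]_(m, N), identifies k A).

Definition G4 (n : nat) : rel 'I_n :=
  fun i j => [|| val j == (i + 1) %% n, val j == (i + n - 1) %% n,
                 val j == (i + 2) %% n | val j == (i + n - 2) %% n].
Arguments G4 n : clear implicits.

(* Take 0/1 matrices A1 on n./2 columns and A2 on (uphalf n) columns identifying
   k-sparse vectors, and index the columns of A1 by the odd vertices 2i+1 and
   those of A2 by the even vertices 2i.  The combined matrix has the rows
     (row of A1 on the odd vertices) + (all even vertices),
     (all odd vertices) + (row of A2 on the even vertices),
     (all even vertices),   (all odd vertices).
   Every row contains a whole parity class, and in G4 n such a set is connected
   (same-parity vertices are joined by steps of 2, the others are one step away
   from them), so this is a measurement matrix.  The last two rows measure the
   parity sums, which can be subtracted from the other rows to recover A1 and A2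
   applied to the odd and even parts of x; hence the combined matrix identifies
   k-sparse vectors. *)

From Stdlib Require Import Reals Classical ClassicalEpsilon FunctionalExtensionality Wf_nat.
From HB Require Import structures.
From mathcomp Require Import all_boot all_algebra zify.
Set Implicit Arguments. Unset Strict Implicit. Unset Printing Implicit Defensive.

HB.instance Definition _ :=
  Monoid.isComLaw.Build R R0 Rplus (fun a b c => esym (Rplus_assoc a b c)) Rplus_comm Rplus_0_l.

Lemma min_nat_spec (P : nat -> Prop) : (exists m, P m) ->
  P (min_nat P) /\ forall m, P m -> min_nat P <= m.
Proof.
move=> exP.
have [m [[Pm m_least] _]] :=
  @dec_inh_nat_subset_has_unique_least_element P (fun m => classic (P m)) exP.
apply: (epsilon_spec (inhabits 0) (fun m => P m /\ forall m', P m' -> m <= m')).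
by exists m; split=> // m' /m_least /leP.
Qed.

Definition support_matrix (m n : nat) (S : 'I_m -> {set 'I_n}) : 'M[bool]_(m, n) :=
  (\matrix_(r, j) (j \in S r))%R.

Lemma row_support_matrix m n (S : 'I_m -> {set 'I_n}) r :
  row_support (support_matrix S) r = S r.
Proof. by apply/setP => j; rewrite inE mxE. Qed.

Lemma mulv_support_matrix m n (S : 'I_m -> {set 'I_n}) x r :
  mulv (support_matrix S) x r = \big[Rplus/R0]_(j in S r) x j.
Proof. by apply: eq_bigl => j; rewrite mxE. Qed.

Lemma mulv_comp m N n (A : 'M[bool]_(m, N)) (h : 'I_N -> 'I_n) x r :
  injective h ->
  mulv A (fun i => x (h i)) r = \big[Rplus/R0]_(j in h @: [set i | A r i]) x j.
Proof.
move=> h_inj; rewrite big_imset; last by move=> i i' _ _; exact: h_inj.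
by apply: eq_bigl => i; rewrite inE.
Qed.

Lemma sum_setU_disjoint n (S T : {set 'I_n}) (x : 'I_n -> R) : [disjoint S & T] ->
  \big[Rplus/R0]_(j in S :|: T) x j =
  Rplus (\big[Rplus/R0]_(j in S) x j) (\big[Rplus/R0]_(j in T) x j).
Proof. by move=> disjST; rewrite -bigU //; apply: eq_bigl => j; rewrite inE. Qed.

Lemma ksparse_comp n N k (h : 'I_N -> 'I_n) (x : 'I_n -> R) :
  injective h -> ksparse k x -> ksparse k (fun i => x (h i)).
Proof.
move=> h_inj [S [cardS xS]]; exists (h @^-1: S); split.
  rewrite -(card_imset _ h_inj); apply: leq_trans cardS; apply: subset_leq_card.
  by apply/subsetP => y /imsetP [i]; rewrite inE => iS ->.
by move=> i; rewrite inE => /xS.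
Qed.

(* The identity matrix identifies all vectors; in particular M^C_{k,N} is well defined. *)
Lemma MC_exists k N : exists m, exists A : 'M[bool]_(m, N), identifies k A.
Proof.
exists N, (support_matrix (fun r : 'I_N => [set r])) => x1 x2 _ _ x12 Ax12; apply: x12.
apply: functional_extensionality => r; have := congr1 (@^~ r) Ax12.
by rewrite !mulv_support_matrix !big_set1.
Qed.

Section Combination.
Variables (n p q a b : nat) (f : 'I_p -> 'I_n) (g : 'I_q -> 'I_n).
Variables (A1 : 'M[bool]_(a, p)) (A2 : 'M[bool]_(b, q)).

Definition combined_support (r : 'I_(a + b + 2)) : {set 'I_n} :=
  match split r with
  | inl r' => match split r' with
              | inl r1 => f @: [set i | A1 r1 i] :|: g @: setT
              | inr r2 => f @: setT :|: g @: [set i | A2 r2 i]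
              end
  | inr t => if val t == 0 then g @: setT else f @: setT
  end.

Definition combined_matrix : 'M[bool]_(a + b + 2, n) := support_matrix combined_support.

Definition A1_row (r1 : 'I_a) : 'I_(a + b + 2) := lshift 2 (lshift b r1).
Definition A2_row (r2 : 'I_b) : 'I_(a + b + 2) := lshift 2 (rshift a r2).
Definition g_image_row : 'I_(a + b + 2) := rshift (a + b) (ord0 : 'I_2).
Definition f_image_row : 'I_(a + b + 2) := rshift (a + b) (ord_max : 'I_2).

Lemma combined_support_full r :
  (f @: setT \subset combined_support r) || (g @: setT \subset combined_support r).
Proof.
rewrite /combined_support; case: split => [r'|t].
  by case: split => r1; rewrite ?subsetUr ?subsetUl ?orbT.
by case: ifP; rewrite subxx ?orbT.
Qed.

Hypotheses (f_inj : injective f) (g_inj : injective g).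
Hypothesis fg_disjoint : forall i i', f i != g i'.
Hypothesis fg_cover : forall j, (exists i, f i = j) \/ (exists i, g i = j).

Lemma images_disjoint (P : {set 'I_p}) (Q : {set 'I_q}) : [disjoint f @: P & g @: Q].
Proof.
apply/pred0P => j /=; apply/negP => /andP [/imsetP [i _ ->] /imsetP [i' _]].
by apply/eqP; exact: fg_disjoint.
Qed.

Lemma mulv_combined (x : 'I_n -> R) r :
  mulv combined_matrix x r = \big[Rplus/R0]_(j in combined_support r) x j.
Proof. exact: mulv_support_matrix. Qed.

Lemma mulv_combined_g (x : 'I_n -> R) :
  mulv combined_matrix x g_image_row = \big[Rplus/R0]_(j in g @: setT) x j.
Proof. by rewrite mulv_combined /combined_support /= (unsplitK (inr _)). Qed.

Lemma mulv_combined_f (x : 'I_n -> R) :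
  mulv combined_matrix x f_image_row = \big[Rplus/R0]_(j in f @: setT) x j.
Proof. by rewrite mulv_combined /combined_support /= (unsplitK (inr _)). Qed.

Lemma mulv_combined_A1 (x : 'I_n -> R) (r1 : 'I_a) :
  mulv combined_matrix x (A1_row r1) =
  Rplus (mulv A1 (fun i => x (f i)) r1) (mulv combined_matrix x g_image_row).
Proof.
rewrite mulv_combined_g mulv_combined (mulv_comp _ _ _ f_inj) /combined_support /=.
by rewrite (unsplitK (inl _)) (unsplitK (inl _)) sum_setU_disjoint // images_disjoint.
Qed.

Lemma mulv_combined_A2 (x : 'I_n -> R) (r2 : 'I_b) :
  mulv combined_matrix x (A2_row r2) =
  Rplus (mulv A2 (fun i => x (g i)) r2) (mulv combined_matrix x f_image_row).
Proof.
rewrite mulv_combined_f mulv_combined (mulv_comp _ _ _ g_inj) /combined_support /=.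
rewrite (unsplitK (inl _)) (unsplitK (inr _)) sum_setU_disjoint ?images_disjoint //.
exact: Rplus_comm.
Qed.

(* Equal measurements force equal restrictions along f and g, which together
   cover every coordinate. *)
Lemma combined_identifies k :
  identifies k A1 -> identifies k A2 -> identifies k combined_matrix.
Proof.
move=> idA1 idA2 x1 x2 sp1 sp2 x12 Bx12; apply: x12.
have same_row r : mulv combined_matrix x1 r = mulv combined_matrix x2 r by rewrite Bx12.
have on_f : (fun i => x1 (f i)) = (fun i => x2 (f i)).
  apply: NNPP => neq; apply: (idA1 _ _ (ksparse_comp f_inj sp1) (ksparse_comp f_inj sp2) neq).
  apply: functional_extensionality => r1.
  apply: (Rplus_eq_reg_r (mulv combined_matrix x1 g_image_row)).
  by rewrite -mulv_combined_A1 (same_row g_image_row) -mulv_combined_A1.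
have on_g : (fun i => x1 (g i)) = (fun i => x2 (g i)).
  apply: NNPP => neq; apply: (idA2 _ _ (ksparse_comp g_inj sp1) (ksparse_comp g_inj sp2) neq).
  apply: functional_extensionality => r2.
  apply: (Rplus_eq_reg_r (mulv combined_matrix x1 f_image_row)).
  by rewrite -mulv_combined_A2 (same_row f_image_row) -mulv_combined_A2.
apply: functional_extensionality => j.
case: (fg_cover j) => [[i <-] | [i <-]]; first exact: (congr1 (@^~ i) on_f).
exact: (congr1 (@^~ i) on_g).
Qed.

End Combination.

Lemma odd_vertex_subproof n (i : 'I_(n./2)) : i.*2.+1 < n.
Proof. have := ltn_ord i; have := odd_double_half n; rewrite -!muln2; lia. Qed.

Lemma even_vertex_subproof n (i : 'I_(uphalf n)) : i.*2 < n.
Proof.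
have := ltn_ord i; move: (nat_of_ord i) => m; have := odd_double_half n.
by rewrite uphalf_half -!muln2; case: odd => /=; lia.
Qed.

Definition odd_vertex n (i : 'I_(n./2)) : 'I_n := Ordinal (odd_vertex_subproof i).
Definition even_vertex n (i : 'I_(uphalf n)) : 'I_n := Ordinal (even_vertex_subproof i).
Arguments odd_vertex {n} i.
Arguments even_vertex {n} i.

Lemma odd_vertex_inj n : injective (@odd_vertex n).
Proof. by move=> i i' /(congr1 val) [] /double_inj /ord_inj. Qed.

Lemma even_vertex_inj n : injective (@even_vertex n).
Proof. by move=> i i' /(congr1 val) /double_inj /ord_inj. Qed.

Lemma odd_even_vertex_neq n (i : 'I_(n./2)) (i' : 'I_(uphalf n)) :
  odd_vertex i != even_vertex i'.
Proof. by apply/negP => /eqP /(congr1 (odd \o val)) /=; rewrite !odd_double. Qed.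

Lemma parity_vertex_cover n (j : 'I_n) :
  (exists i, odd_vertex i = j) \/ (exists i, even_vertex i = j).
Proof.
have j_lt := ltn_ord j; have n_eq := odd_double_half n; have j_eq := odd_double_half j.
case: (boolP (odd j)) => odd_j; [left | right].
  have lt : j./2 < n./2 by move: n_eq j_eq; rewrite odd_j -!muln2; lia.
  by exists (Ordinal lt); apply: ord_inj; rewrite /= -[RHS]j_eq odd_j.
have lt : j./2 < uphalf n.
  by move: n_eq j_eq; rewrite uphalf_half (negbTE odd_j) -!muln2; case: odd => /=; lia.
by exists (Ordinal lt); apply: ord_inj; rewrite /= -[RHS]j_eq (negbTE odd_j).
Qed.

Lemma G4_step n (u v : 'I_n) d :
  0 < d < 3 -> v = u + d :> nat -> G4 n u v && G4 n v u.
Proof.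
move=> d_range v_eq; have v_lt := ltn_ord v.
have fwd : (v : nat) == (u + d) %% n by rewrite modn_small -v_eq.
have bwd : (u : nat) == (v + n - d) %% n.
  by rewrite (_ : v + n - d = u + n) ?modnDr ?modn_small //; lia.
rewrite /G4; move: d_range fwd bwd; case: d {v_eq} => [|[|[|d]]] // _ -> ->; rewrite ?orbT //.
Qed.

Definition G4_within n (S : {set 'I_n}) : rel 'I_n :=
  [rel u v | [&& u \in S, v \in S & G4 n u v]].

Definition linked n (S : {set 'I_n}) (u v : 'I_n) : Prop :=
  connect (G4_within S) u v /\ connect (G4_within S) v u.

Lemma linked_trans n (S : {set 'I_n}) (u v w : 'I_n) :
  linked S u v -> linked S v w -> linked S u w.
Proof. by move=> [uv vu] [vw wv]; split; apply: connect_trans; eassumption. Qed.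

Lemma linked_sym n (S : {set 'I_n}) (u v : 'I_n) : linked S u v -> linked S v u.
Proof. by case. Qed.

Lemma linked_step n (S : {set 'I_n}) (u v : 'I_n) d : 0 < d < 3 -> v = u + d :> nat ->
  u \in S -> v \in S -> linked S u v.
Proof.
move=> d_range v_eq uS vS; have /andP [uv vu] := G4_step d_range v_eq.
by split; apply: connect1; rewrite /G4_within /= uS vS ?uv ?vu.
Qed.

(* Within a set containing a whole parity class, every vertex of the class is
   linked to the least one, c, by steps of length 2. *)
Lemma parity_class_linked n (S : {set 'I_n}) (b : bool) (c : 'I_n) :
  val c = b -> (forall j : 'I_n, odd j = b -> j \in S) ->
  forall v : 'I_n, odd v = b -> linked S c v.
Proof.
move=> c_eq classS v odd_v; have [m v_eq] : exists m, val v = b + m.*2.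
  by exists v./2; rewrite -odd_v odd_double_half.
elim: m v v_eq odd_v => [|m IHm] v v_eq odd_v.
  by have -> : v = c by apply: ord_inj; rewrite v_eq c_eq addn0.
have w_lt : b + m.*2 < n by move: (ltn_ord v); rewrite v_eq doubleS; lia.
have odd_w : odd (Ordinal w_lt) = b by rewrite /= oddD odd_double addbF; case: (b).
have v_step : val v = Ordinal w_lt + 2 by rewrite v_eq /= doubleS; lia.
apply: linked_trans (IHm (Ordinal w_lt) erefl odd_w) _.
exact: (linked_step (d := 2)) v_step (classS _ odd_w) (classS _ odd_v).
Qed.

(* Every vertex has a neighbour at distance 1, hence of the other parity. *)
Lemma opposite_parity_neighbour n (S : {set 'I_n}) (b : bool) (v : 'I_n) :
  1 < n -> odd v != b -> (forall j : 'I_n, odd j = b -> j \in S) -> v \in S ->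
  exists2 w : 'I_n, odd w = b & linked S w v.
Proof.
move=> n_gt1 odd_v classS vS; case: (posnP v) => [v0 | v_pos].
  have odd_w : odd (Ordinal n_gt1) = b by move: odd_v; rewrite v0; case: (b).
  exists (Ordinal n_gt1) => //; apply: linked_sym.
  by apply: (linked_step (d := 1)) vS (classS _ odd_w); rewrite /=; lia.
have w_lt : v.-1 < n by move: (ltn_ord v); lia.
have odd_w : odd (Ordinal w_lt) = b.
  by move: odd_v; rewrite -[in odd v](prednK v_pos) /=; case: (b); case: odd.
exists (Ordinal w_lt) => //.
by apply: (linked_step (d := 1)) (classS _ odd_w) vS; rewrite /=; lia.
Qed.

Lemma parity_class_connected n (S : {set 'I_n}) (b : bool) :
  1 < n -> (forall j : 'I_n, odd j = b -> j \in S) -> induced_connected (G4 n) S.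
Proof.
move=> n_gt1 classS.
have c_lt : b < n by case: (b); lia.
have c_eq : val (Ordinal c_lt) = b by [].
have hub v : v \in S -> linked S (Ordinal c_lt) v.
  move=> vS; case: (boolP (odd v == b)) => [/eqP odd_v | odd_v].
    exact: parity_class_linked.
  have [w odd_w wv] := opposite_parity_neighbour n_gt1 odd_v classS vS.
  exact: linked_trans (parity_class_linked c_eq classS odd_w) wv.
apply/forall_inP => u uS; apply/forall_inP => v vS.
by have [_ uc] := hub u uS; have [cv _] := hub v vS; apply: connect_trans uc cv.
Qed.

Lemma mem_odd_vertices n (j : 'I_n) : (j \in odd_vertex @: setT) = odd j.
Proof.
case: (parity_vertex_cover j) => [[i <-] | [i <-]].
  by rewrite imset_f //= odd_double.
rewrite /= odd_double; apply/negbTE/imsetP => [[i' _ /eqP]].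
by rewrite eq_sym (negbTE (odd_even_vertex_neq _ _)).
Qed.

Lemma mem_even_vertices n (j : 'I_n) : (j \in even_vertex @: setT) = ~~ odd j.
Proof.
case: (parity_vertex_cover j) => [[i <-] | [i <-]]; last by rewrite imset_f //= odd_double.
rewrite /= odd_double /=; apply/negbTE/imsetP => [[i' _ /eqP]].
by rewrite (negbTE (odd_even_vertex_neq _ _)).
Qed.

Lemma parity_combined_measurement n a b
    (A1 : 'M[bool]_(a, n./2)) (A2 : 'M[bool]_(b, uphalf n)) :
  1 < n -> measurement_matrix (G4 n) (combined_matrix odd_vertex even_vertex A1 A2).
Proof.
move=> n_gt1 r _; rewrite row_support_matrix.
case/orP: (combined_support_full odd_vertex even_vertex A1 A2 r) => full.
  apply: (parity_class_connected (b := true)) => // j odd_j.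
  by apply: (subsetP full); rewrite mem_odd_vertices odd_j.
apply: (parity_class_connected (b := false)) => // j odd_j.
by apply: (subsetP full); rewrite mem_even_vertices odd_j.
Qed.

Theorem theorem2 (n k : nat) (hn : 5 <= n) (hk : 1 <= k) :
  MG k (G4 n) <= MC k n./2 + MC k (uphalf n) + 2.
Proof.
have [[A1 idA1] _] := min_nat_spec (MC_exists k n./2).
have [[A2 idA2] _] := min_nat_spec (MC_exists k (uphalf n)).
have B_ok : exists B : 'M[bool]_(MC k n./2 + MC k (uphalf n) + 2, n),
    measurement_matrix (G4 n) B /\ identifies k B.
  exists (combined_matrix odd_vertex even_vertex A1 A2); split.
    by apply: parity_combined_measurement; lia.
  apply: combined_identifies idA1 idA2.
  - exact: odd_vertex_inj.
  - exact: even_vertex_inj.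
  - exact: odd_even_vertex_neq.
  - exact: parity_vertex_cover.
exact: (min_nat_spec (ex_intro _ _ B_ok)).2 _ B_ok.
Qed.
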